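(* Let $M\in\mathrm{M}_n(\mathbb{K})$ be a cyclic matrix with minimal polynomial $f=f_1^{m_1}\cdots f_s^{m_s}$, where $f_1,\dots,f_s\in\mathbb{K}[x]$ are pairwise distinct monic irreducible polynomials and $m_i\ge1$. Let $\mathcal{C}\subseteq\mathbb{L}^n$ be a nonzero $M$-cyclic code of dimension $k$ with generator polynomial $g$. Then $M_k(\mathcal{C})=n$ if and only if $f_i\nmid g$ for all $i\in\{1,\dots,s\}$.
   Context: Let $\mathbb{L}/\mathbb{K}$ be a field extension of finite degree $m\ge n$. Vectors are row vectors. For $c=(c_1,\dots,c_n)\in\mathbb{L}^n$, $\mathrm{Rsupp}(c)\subseteq\mathbb{K}^n$ is the $\mathbb{K}$-row space of the $m\times n$ matrix over $\mathbb{K}$ whose $j$-th column is the coordinate vector of $c_j$ in a fixed $\mathbb{K}$-basis of $\mathbb{L}$; for an $\mathbb{L}$-subspace $\mathcal{D}$, $\mathrm{wt}_R(\mathcal{D})$ is the $\mathbb{K}$-dimension of the span of all $\mathrm{Rsupp}(d)$, $d\in\mathcal{D}$. For a $k$-dimensional $\mathbb{L}$-subspace $\mathcal{C}$ and $1\le r\le k$, $M_r(\mathcal{C})=\min\{\mathrm{wt}_R(\mathcal{D}):\mathcal{D}\subseteq\mathcal{C},\dim_{\mathbb{L}}\mathcal{D}=r\}$. A matrix $M\in\mathrm{M}_n(\mathbb{K})$ is cyclic if there is $v\in\mathbb{K}^n$ (a cyclic vector) with $(v,vM^t,\dots,v(M^t)^{n-1})$ a basis; equivalently its minimal polynomial $f$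 has degree $n$. An $M$-cyclic code is an $\mathbb{L}$-subspace $\mathcal{C}\subseteq\mathbb{L}^n$ with $cM^t\in\mathcal{C}$ for all $c\in\mathcal{C}$; each equals $\mathcal{C}_g=\{v\,g(M)^tP(M)^t:P\in\mathbb{L}[x]\}$ for a unique monic divisor $g$ of $f$ in $\mathbb{L}[x]$ (its generator polynomial), and $\dim\mathcal{C}_g=n-\deg g$. *)

From HB Require Import structures.
From mathcomp Require Import all_boot all_order all_algebra all_field.
From Stdlib Require Import ClassicalEpsilon.
Set Implicit Arguments. Unset Strict Implicit. Unset Printing Implicit Defensive.
Import GRing.Theory.
Local Open Scope ring_scope.

Section RankMetric.
Variables (K : fieldType) (L : fieldExtType K) (n : nat).

(* Rsupp(c): the K-row space of the (dim L) x n matrix over K whose j-th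
   column is the coordinate vector of c_j in the fixed K-basis vbasis {:L}. *)
Definition Rsupp_mx (c : 'rV[L]_n) : 'M[K]_(\dim {:L}, n) :=
  \matrix_(i < \dim {:L}, j < n) coord (vbasis fullv) i (c 0 j).

Definition Rspan (p : nat) (D : 'M[L]_(p, n)) : 'M[K]_n :=
  epsilon (inhabits 0) (fun W : 'M[K]_n =>
    (forall d : 'rV[L]_n, (d <= D)%MS -> (Rsupp_mx d <= W)%MS) /\
    (forall W' : 'M[K]_n,
       (forall d : 'rV[L]_n, (d <= D)%MS -> (Rsupp_mx d <= W')%MS) ->
       (W <= W')%MS)).

Definition wtR (p : nat) (D : 'M[L]_(p, n)) : nat := \rank (Rspan D).

Definition Mr (p : nat) (C : 'M[L]_(p, n)) (r : nat) : nat :=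
  epsilon (inhabits 0%N) (fun w : nat =>
    (exists D : 'M[L]_n, (D <= C)%MS /\ \rank D = r /\ wtR D = w) /\
    (forall D : 'M[L]_n, (D <= C)%MS -> \rank D = r -> (w <= wtR D)%N)).

End RankMetric.

Definition cyclic_vector (K : fieldType) (n : nat) (M : 'M[K]_n) (v : 'rV[K]_n)
  : Prop := \rank (\matrix_(i < n) (v *m (M^T) ^+ i)) = n.

Definition cyclic_mx (K : fieldType) (n : nat) (M : 'M[K]_n) : Prop :=
  exists v, cyclic_vector M v.

Definition Mcyclic_code (K : fieldType) (L : fieldExtType K) (n p : nat)
  (M : 'M[K]_n) (C : 'M[L]_(p, n)) : Prop :=
  forall c : 'rV[L]_n, (c <= C)%MS -> (c *m (map_mx (in_alg L) M)^T <= C)%MS.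

Definition in_Cg (K : fieldType) (L : fieldExtType K) (n : nat)
  (M : 'M[K]_n.+1) (v : 'rV[K]_n.+1) (g : {poly L}) (c : 'rV[L]_n.+1) : Prop :=
  exists P : {poly L},
    c = map_mx (in_alg L) v *m (horner_mx (map_mx (in_alg L) M) g)^T
          *m (horner_mx (map_mx (in_alg L) M) P)^T.

Definition generator_poly (K : fieldType) (L : fieldExtType K) (n p : nat)
  (M : 'M[K]_n.+1) (v : 'rV[K]_n.+1) (C : 'M[L]_(p, n.+1)) (g : {poly L})
  : Prop :=
  [/\ g \is monic, g %| map_poly (in_alg L) (mxminpoly M) &
      forall c : 'rV[L]_n.+1, (c <= C)%MS <-> in_Cg M v g c].

From HB Require Import structures.
From mathcomp Require Import all_boot all_order all_algebra all_field.
From Stdlib Require Import ClassicalEpsilon Classical.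
Set Implicit Arguments. Unset Strict Implicit. Unset Printing Implicit Defensive.
Import GRing.Theory.
Local Open Scope ring_scope.

(* Rsupp(c) lies in a K-subspace W of K^n exactly when c lies in W (x) L, so
   M_k(C) = wt_R(C), and this equals n iff C lies in no W (x) L with W proper.
   If f_i divides g, every codeword is a multiple of f_i(M)^t, which is
   singular because f_i divides the minimal polynomial of M.  Conversely, a
   proper W gives u <> 0 in K^n orthogonal to W; since v is cyclic this forces
   u g(M) = 0.  Peeling the factors of f = f_1^m_1 ... f_s^m_s off u yields
   w <> 0 in K^n killed by some f_j and by g, and then splitting g mod f_j
   into K-coordinates shows that f_j divides g. *)

Section Coordinates.
Variables (K : fieldType) (L : fieldExtType K).
Local Notation B := (vbasis {:L}).
Local Notation d := (\dim {:L}).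
Local Notation "A ^L" := (map_mx (in_alg L) A) (at level 2, format "A ^L").

Definition coord_mx (i : 'I_d) a b (X : 'M[L]_(a, b)) : 'M[K]_(a, b) :=
  \matrix_(r, c) coord B i (X r c).

Definition coord_poly (i : 'I_d) (r : {poly L}) : {poly K} :=
  \poly_(j < size r) coord B i r`_j.

Lemma coord_mx_decomp a b (X : 'M[L]_(a, b)) :
  X = \sum_(i < d) B`_i *: (coord_mx i X)^L.
Proof.
apply/matrixP => r c; rewrite summxE {1}(coord_vbasis (memvf (X r c))).
by apply: eq_bigr => i _; rewrite !mxE mulr_algr.
Qed.

Lemma sum_vbasis_map_mx_eq0 a b (Y : 'I_d -> 'M[K]_(a, b)) :
  \sum_(i < d) B`_i *: (Y i)^L = 0 -> forall i, Y i = 0.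
Proof.
move=> Y0 i; apply/matrixP => r c.
have := congr1 (fun X : 'M[L]_(a, b) => coord B i (X r c)) Y0.
rewrite summxE mxE linear0 /=.
under eq_bigr => j _ do rewrite !mxE mulr_algr.
by rewrite coord_sum_free ?mxE //; apply: basis_free (vbasisP _).
Qed.

Lemma Rsupp_mx_sub n m (c : 'rV[L]_n) (W : 'M[K]_(m, n)) :
  (Rsupp_mx c <= W)%MS = (c <= W^L)%MS.
Proof.
have rowE i : row i (Rsupp_mx c) = coord_mx i c.
  by apply/rowP => j; rewrite !mxE.
apply/idP/idP => [sRW | /submxP[x def_c]].
  rewrite [c]coord_mx_decomp; apply: summx_sub => i _; apply: scalemx_sub.
  by rewrite map_submx -rowE (submx_trans (row_sub _ _) sRW).
apply/row_subP => i; rewrite rowE.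
suff -> : coord_mx i c = coord_mx i x *m W by apply: submxMl.
apply/eqP; rewrite -subr_eq0; apply/eqP; move: i.
apply: sum_vbasis_map_mx_eq0.
under eq_bigr => j _ do rewrite map_mxB map_mxM scalerBr scalemxAl.
by rewrite sumrB -mulmx_suml -!coord_mx_decomp def_c subrr.
Qed.

Lemma coord_poly_decomp (r : {poly L}) :
  r = \sum_(i < d) map_poly (in_alg L) (coord_poly i r) * (B`_i)%:P.
Proof.
apply/polyP => j; rewrite coef_sum.
under eq_bigr => i _ do rewrite coefMC coef_map coef_poly.
case: ltnP => [_ | le_r_j]; last first.
  by rewrite nth_default // big1 // => i _; rewrite raddf0 mul0r.
rewrite {1}(coord_vbasis (memvf r`_j)).
by apply: eq_bigr => i _; rewrite mulr_algl.
Qed.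

Lemma horner_coord_poly_eq0 n (M : 'M[K]_n.+1) (u : 'rV[K]_n.+1) (r : {poly L}) :
  u^L *m horner_mx M^L r = 0 -> forall i, u *m horner_mx M (coord_poly i r) = 0.
Proof.
move=> ur0; apply: sum_vbasis_map_mx_eq0 (etrans _ ur0).
rewrite {2}[r]coord_poly_decomp.
rewrite rmorph_sum mulmx_sumr; apply: eq_bigr => i _.
rewrite rmorphM /= horner_mx_C -mulmxE mulmxA mul_mx_scalar.
by rewrite -map_horner_mx -map_mxM.
Qed.

End Coordinates.

Section RankWeight.
Variables (K : fieldType) (L : fieldExtType K) (n : nat).
Local Notation "A ^L" := (map_mx (in_alg L) A) (at level 2, format "A ^L").

Lemma Rspan_exists p (D : 'M[L]_(p, n)) :
  exists W : 'M[K]_n,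
    (forall c : 'rV_n, (c <= D)%MS -> (Rsupp_mx c <= W)%MS) /\
    (forall W' : 'M[K]_n,
       (forall c : 'rV_n, (c <= D)%MS -> (Rsupp_mx c <= W')%MS) -> (W <= W')%MS).
Proof.
(* Covering is stable under intersection, so intersecting with any covering
   W' not above W strictly lowers the rank. *)
set covers := fun W : 'M[K]_n =>
  forall c : 'rV_n, (c <= D)%MS -> (Rsupp_mx c <= W)%MS.
suff least_below m (W : 'M[K]_n) : (\rank W <= m)%N -> covers W ->
    exists W0, covers W0 /\ forall W', covers W' -> (W0 <= W')%MS.
  by apply: (least_below n 1%:M) => [|c _]; rewrite ?rank_leq_col ?submx1.
elim: m W => [|m IHm] W rkW covW.
  exists W; split=> // W' _.
  by move: rkW; rewrite leqn0 mxrank_eq0 => /eqP ->; apply: sub0mx.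
case: (classic (forall W', covers W' -> (W <= W')%MS)) => [least|].
  by exists W.
move=> /not_all_ex_not[W'] /(imply_to_and (covers W'))[covW' not_sW].
apply: (IHm (W :&: W')%MS) => [|c scD]; last by rewrite sub_capmx covW ?covW'.
have [le_rk eq_rk] := mxrank_leqif_sup (capmxSl W W').
rewrite -ltnS (leq_trans _ rkW) // ltn_neqAle le_rk andbT eq_rk.
by apply: contra_notN not_sW => /submx_trans; apply; apply: capmxSr.
Qed.

Lemma Rspan_spec p (D : 'M[L]_(p, n)) :
  (D <= (Rspan D)^L)%MS /\
  forall W : 'M[K]_n, (D <= W^L)%MS -> (Rspan D <= W)%MS.
Proof.
have [covD least] := epsilon_spec (inhabits 0) _ (Rspan_exists D).
have coversE (W : 'M[K]_n) :
    (forall c : 'rV_n, (c <= D)%MS -> (Rsupp_mx c <= W)%MS) <-> (D <= W^L)%MS.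
  split=> [covW | sDW c scD]; last by rewrite Rsupp_mx_sub (submx_trans scD).
  by apply/row_subP => i; rewrite -Rsupp_mx_sub covW ?row_sub.
by split=> [|W /coversE]; [apply/coversE | apply: least].
Qed.

Lemma wtR_eq_full p (D : 'M[L]_(p, n)) :
  wtR D = n <-> forall W : 'M[K]_n, (D <= W^L)%MS -> \rank W = n.
Proof.
have [sDR least] := Rspan_spec D; split=> [wtDn W sDW | full]; last exact: full.
by apply/eqP; rewrite eqn_leq rank_leq_col -{1}wtDn mxrankS ?least.
Qed.

Lemma wtR_eqmx p1 p2 (D1 : 'M[L]_(p1, n)) (D2 : 'M[L]_(p2, n)) :
  (D1 :=: D2)%MS -> wtR D1 = wtR D2.
Proof.
move=> eqD; have [sD1 least1] := Rspan_spec D1.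
have [sD2 least2] := Rspan_spec D2.
by apply/eqP; rewrite eqn_leq !mxrankS // ?least1 ?least2 ?eqD // -eqD.
Qed.

Lemma Mr_rank p (C : 'M[L]_(p, n)) : Mr C (\rank C) = wtR C.
Proof.
have wtR_eq_rank_sub (D : 'M[L]_n) :
    (D <= C)%MS -> \rank D = \rank C -> wtR D = wtR C.
  move=> sDC rkD; apply: wtR_eqmx; apply/eqmxP.
  by have [_ <-] := mxrank_leqif_eq sDC; rewrite rkD eqxx.
have MrP : exists w, (exists D : 'M[L]_n,
      (D <= C)%MS /\ \rank D = \rank C /\ wtR D = w) /\
    (forall D : 'M[L]_n, (D <= C)%MS -> \rank D = \rank C -> (w <= wtR D)%N).
  exists (wtR C); split=> [|D sDC rkD]; last by rewrite wtR_eq_rank_sub.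
  by exists <<C>>%MS; rewrite !genmxE (wtR_eqmx (genmxE C)).
rewrite /Mr; have [[D [sDC [rkD <-]]] _] := epsilon_spec (inhabits 0%N) _ MrP.
exact: wtR_eq_rank_sub.
Qed.

End RankWeight.

Lemma trmx_horner_mx (R : comNzRingType) n (A : 'M[R]_n.+1) (P : {poly R}) :
  (horner_mx A P)^T = horner_mx A^T P.
Proof.
elim/poly_ind: P => [|P c IHP]; first by rewrite !rmorph0 trmx0.
rewrite !rmorphD !rmorphM /= !horner_mx_X !horner_mx_C linearD /=.
rewrite -!mulmxE trmx_mul.
rewrite IHP tr_scalar_mx; congr (_ + _).
by rewrite -{1}(horner_mx_X A^T) mulmxE comm_horner_mx2 horner_mx_X.
Qed.

Section HornerMx.
Variables (F : fieldType) (n : nat) (M : 'M[F]_n.+1).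

Lemma horner_mx_mulmxC (p q : {poly F}) :
  horner_mx M p *m horner_mx M q = horner_mx M q *m horner_mx M p.
Proof. by rewrite mulmxE comm_horner_mx2. Qed.

Lemma horner_mx_dvd_mxminpoly_not_unit (q : {poly F}) :
  (1 < size q)%N -> q %| mxminpoly M -> horner_mx M q \notin unitmx.
Proof.
move=> q_nonconst dvd_q; apply/negP => q_unit.
set h := mxminpoly M %/ q.
have h_root : horner_mx M h = 0.
  rewrite -(mulmxK q_unit (horner_mx M h)) mulmxE -rmorphM /= divpK //.
  by rewrite mx_root_minpoly mul0r.
have q_neq0 : q != 0 by rewrite -size_poly_gt0 (ltn_trans _ q_nonconst).
have minpoly_neq0 : mxminpoly M != 0 by rewrite -size_poly_gt0 size_mxminpoly.
have size_h : size h = (size (mxminpoly M) - (size q).-1)%N := size_divp _ q_neq0.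
have le_q_minpoly := dvdp_leq minpoly_neq0 dvd_q.
have h_neq0 : h != 0.
  rewrite -size_poly_gt0 size_h subn_gt0 (leq_trans _ le_q_minpoly) //.
  by rewrite ltn_predL (ltn_trans _ q_nonconst).
have := dvdp_leq h_neq0 (mxminpoly_min h_root).
by rewrite size_h leqNgt ltn_subrL -subn1 subn_gt0 q_nonconst size_mxminpoly.
Qed.

Lemma horner_mx_coprime_eq0 (p q : {poly F}) (u : 'rV_n.+1) : coprimep p q ->
  u *m horner_mx M p = 0 -> u *m horner_mx M q = 0 -> u = 0.
Proof.
move=> cop_pq /sub_kermxP up0 /sub_kermxP uq0; apply/eqP.
by rewrite -submx0 -(mxdirect_kermxpoly M cop_pq) sub_capmx up0 uq0.
Qed.

Lemma annihilator_prod_factor (I : Type) (r : seq I) (P : I -> {poly F})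
    (u : 'rV_n.+1) :
  u != 0 -> u *m horner_mx M (\prod_(j <- r) P j) = 0 ->
  exists j R,
    u *m horner_mx M R != 0 /\ u *m horner_mx M R *m horner_mx M (P j) = 0.
Proof.
elim: r u => [|j r IHr] u u_neq0.
  by rewrite big_nil rmorph1 mulmx1 => u0; rewrite u0 eqxx in u_neq0.
rewrite big_cons rmorphM -mulmxE mulmxA.
have [uPj0 _ | uPj_neq0] := eqVneq (u *m horner_mx M (P j)) 0.
  by exists j, 1; rewrite rmorph1 mulmx1.
case/(IHr _ uPj_neq0) => i [R [uR_neq0 uRPi0]].
by exists i, (P j * R); rewrite rmorphM -mulmxE mulmxA.
Qed.

Lemma annihilator_exp_factor (q : {poly F}) (m : nat) (u : 'rV_n.+1) :
  u != 0 -> u *m horner_mx M (q ^+ m) = 0 ->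
  exists R, u *m horner_mx M R != 0 /\ u *m horner_mx M R *m horner_mx M q = 0.
Proof.
rewrite -iter_mulr_1 -(big_nseq 1 *%R m tt (fun=> q)) => u_neq0.
by case/(annihilator_prod_factor u_neq0) => _ [R]; exists R.
Qed.

Lemma cyclic_vector_orthogonal_eq0 (v y : 'rV_n.+1) : cyclic_vector M v ->
  (forall P, v *m horner_mx M^T P *m y^T = 0) -> y = 0.
Proof.
set V := \matrix_(i < n.+1) (v *m M^T ^+ i) => V_free orth_y.
have V_unit : V \in unitmx by rewrite -row_free_unit /row_free V_free.
apply: trmx_inj; rewrite trmx0 -(mulKmx V_unit y^T).
suff -> : V *m y^T = 0 by rewrite mulmx0.
apply/row_matrixP => i; rewrite row_mul row0 rowK.
by rewrite -(horner_mx_X M^T) -rmorphXn orth_y.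
Qed.

Lemma map_cyclic_vector (E : fieldType) (f : {rmorphism F -> E}) (v : 'rV_n.+1) :
  cyclic_vector M v -> cyclic_vector (map_mx f M) (map_mx f v).
Proof.
rewrite /cyclic_vector -(mxrank_map f); congr (\rank _ = _).
by apply/row_matrixP => i; rewrite -map_row !rowK map_mxM map_trmx rmorphXn.
Qed.

End HornerMx.

Section CyclicCode.
Variables (K : fieldType) (L : fieldExtType K) (n p : nat).
Variables (M : 'M[K]_n.+1) (v : 'rV[K]_n.+1) (C : 'M[L]_(p, n.+1)) (g : {poly L}).
Hypothesis C_eq_Cg : forall c, (c <= C)%MS <-> in_Cg M v g c.
Local Notation "A ^L" := (map_mx (in_alg L) A) (at level 2, format "A ^L").

Lemma code_sub_factor (q : {poly K}) :
  map_poly (in_alg L) q %| g -> (C <= (horner_mx M q)^T^L)%MS.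
Proof.
move=> /dvdpP[h def_g]; apply/row_subP => i.
have /C_eq_Cg[P ->] := row_sub i C; rewrite -mulmxA.
have -> : (horner_mx M^L g)^T *m (horner_mx M^L P)^T =
    (horner_mx M^L (P * h))^T *m (horner_mx M^L (map_poly (in_alg L) q))^T.
  by rewrite -!trmx_mul !mulmxE -!rmorphM def_g mulrA mulrC.
by rewrite mulmxA -map_horner_mx map_trmx submxMl.
Qed.

Lemma code_annihilator (W : 'M[K]_n.+1) : cyclic_vector M v ->
  (C <= W^L)%MS -> (\rank W < n.+1)%N ->
  exists2 u : 'rV[K]_n.+1, u != 0 & u^L *m horner_mx M^L g = 0.
Proof.
move=> v_cyclic sCW rkW.
have /rowV0Pn[u /sub_kermxP uW0 u_neq0] : kermx W^T != 0.
  by rewrite -mxrank_eq0 mxrank_ker mxrank_tr -lt0n subn_gt0.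
exists u => //.
have vL_cyclic := map_cyclic_vector (in_alg L) v_cyclic.
apply: cyclic_vector_orthogonal_eq0 vL_cyclic _ => P.
rewrite -trmx_horner_mx trmx_mul mulmxA -(mulmxA v^L) -trmx_mul horner_mx_mulmxC.
rewrite trmx_mul mulmxA.
have /submxP[x ->] :
    (v^L *m (horner_mx M^L g)^T *m (horner_mx M^L P)^T <= W^L)%MS.
  by apply: submx_trans sCW; apply/C_eq_Cg; exists P.
rewrite -mulmxA map_trmx -map_mxM -(trmxK W) -trmx_mul uW0.
by rewrite trmx0 map_mx0 mulmx0.
Qed.

Lemma annihilator_horner_mxM (u : 'rV[K]_n.+1) (R : {poly K}) :
  u^L *m horner_mx M^L g = 0 -> (u *m horner_mx M R)^L *m horner_mx M^L g = 0.
Proof.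
move=> ug0; rewrite map_mxM map_horner_mx -mulmxA horner_mx_mulmxC.
by rewrite mulmxA ug0 mul0mx.
Qed.

Lemma irreducible_annihilator_dvdp (f : {poly K}) (u : 'rV[K]_n.+1) :
  irreducible_poly f -> u != 0 -> u *m horner_mx M f = 0 ->
  u^L *m horner_mx M^L g = 0 -> map_poly (in_alg L) f %| g.
Proof.
move=> f_irr u_neq0 uf0 ug0; set fL := map_poly (in_alg L) f.
have size_fL : size fL = size f := size_map_poly _ _.
have fL_neq0 : fL != 0 by rewrite -size_poly_gt0 size_fL (ltn_trans _ f_irr.1).
set r := g %% fL.
have ur0 : u^L *m horner_mx M^L r = 0.
  have -> : r = g - g %/ fL * fL by rewrite {1}(divp_eq g fL) addrAC subrr add0r.
  rewrite rmorphB rmorphM mulmxBr ug0 sub0r -mulmxE horner_mx_mulmxC mulmxA.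
  by rewrite -map_horner_mx -map_mxM uf0 map_mx0 mul0mx oppr0.
(* Each K-coordinate of r has degree < deg f and annihilates u, so it cannot
   be coprime to f; by irreducibility it must vanish. *)
have coord_r0 i : coord_poly i r = 0.
  apply/eqP; apply: contraT => ri_neq0.
  have size_ri : (size (coord_poly i r) < size f)%N.
    by rewrite (leq_ltn_trans (size_poly _ _)) // -size_fL ltn_modp.
  have cop : coprimep f (coord_poly i r).
    rewrite irreducible_poly_coprime //; apply: contraL size_ri.
    by move/(dvdp_leq ri_neq0); rewrite leqNgt.
  have := horner_mx_coprime_eq0 cop uf0 (horner_coord_poly_eq0 ur0 i).
  by move/eqP; rewrite (negbTE u_neq0).
apply/modp_eq0P; rewrite -/r [r]coord_poly_decomp big1 // => i _.
by rewrite coord_r0 rmorph0 mul0r.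
Qed.

End CyclicCode.

Theorem corollary4 (K : fieldType) (L : fieldExtType K) (n : nat)
  (hLn : (n.+1 <= \dim {:L})%N)
  (M : 'M[K]_n.+1) (v : 'rV[K]_n.+1) (hv : cyclic_vector M v)
  (s : nat) (fs : 'I_s -> {poly K}) (ms : 'I_s -> nat)
  (hfs_monic : forall i, fs i \is monic)
  (hfs_irr : forall i, irreducible_poly (fs i))
  (hfs_inj : injective fs)
  (hms : forall i, (1 <= ms i)%N)
  (hf : mxminpoly M = \prod_(i < s) fs i ^+ ms i)
  (p : nat) (C : 'M[L]_(p, n.+1)) (k : nat) (g : {poly L})
  (hC0 : C != 0) (hCcyc : Mcyclic_code M C) (hk : \rank C = k)
  (hg : generator_poly M v C g) :
  Mr C k = n.+1 <-> (forall i, ~~ (map_poly (in_alg L) (fs i) %| g)).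
Proof.
have [_ _ C_eq_Cg] := hg.
rewrite -hk Mr_rank wtR_eq_full; split=> [full i | ndvd_g W sCW].
  apply/negP => /(code_sub_factor C_eq_Cg)/full /eqP.
  rewrite mxrank_tr -/(row_free _) row_free_unit; apply/negP.
  apply: horner_mx_dvd_mxminpoly_not_unit; first exact: (hfs_irr i).1.
  by rewrite hf (bigD1 i) //= dvdp_mulr // dvdp_exp.
apply/eqP; rewrite eqn_leq rank_leq_col leqNgt; apply/negP => rkW.
have [u u_neq0 ug0] := code_annihilator C_eq_Cg hv sCW rkW.
have uf0 : u *m horner_mx M (\prod_(i < s) fs i ^+ ms i) = 0.
  by rewrite -hf mx_root_minpoly mulmx0.
have [j [R [uR_neq0 uRf0]]] := annihilator_prod_factor u_neq0 uf0.
have [R' [w_neq0 wf0]] := annihilator_exp_factor uR_neq0 uRf0.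
apply: (negP (ndvd_g j)).
apply: irreducible_annihilator_dvdp (hfs_irr j) w_neq0 wf0 _.
by do 2!apply: annihilator_horner_mxM.
Qed.
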